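(* Let $n\ge 3$ and $m\ge 3$, let $C_n$ be a cycle on $n$ vertices and $P_m$ a path on $m$ vertices, and let $H$ be the graph obtained by identifying one vertex of $C_n$ with an endpoint of $P_m$ (a $1$-clique sum of $C_n$ and $P_m$). Then $$v(C_n)+v(P_{m-2})-1\le v(H)\le v(C_n)+v(P_{m-2}).$$
   Context: Let $K$ be a field and $S$ a standard graded polynomial ring over $K$. For a proper graded ideal $I\subset S$, the $v$-number is $v(I)=\min\{k\ge 0 : \exists f\in S_k,\ \mathcal P\in\operatorname{Ass}(S/I) \text{ with } (I:f)=\mathcal P\}$. For a finite simple graph $G$ whose vertices are variables of a polynomial ring, $I(G)$ is the edge ideal generated by $x_ix_j$ over edges $\{x_i,x_j\}$, and $v(G):=v(I(G))$. $P_k$ denotes the path on $k$ vertices (vertices $y_1,\dots,y_k$, edges $\{y_i,y_{i+1}\}$) and $C_n$ the cycle on $n$ vertices. A $1$-clique sum of graphs $G_1,G_2$ is $G_1\cup G_2$ where $G_1\cap G_2$ is a single vertex and neither $G_i$ is a single vertex. *)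

From HB Require Import structures.
From mathcomp Require Import all_boot all_algebra.
From mathcomp Require Import mpoly.
Set Implicit Arguments. Unset Strict Implicit. Unset Printing Implicit Defensive.
Import GRing.Theory.
Local Open Scope ring_scope.

(* Ideals of S = K[x_0, ..., x_(N-1)] (standard grading, mdeg) are represented
   as predicates (subsets) on {mpoly K[N]}. *)
Section VNumber.
Variables (K : fieldType) (N : nat).
Local Notation S := {mpoly K[N]}.

Definition is_ideal (I : S -> Prop) : Prop :=
  I 0 /\ (forall a b, I a -> I b -> I (a + b)) /\ (forall r a, I a -> I (r * a)).

Definition ideal_gen (gens : seq S) : S -> Prop :=
  fun f => exists c : nat -> S, f = \sum_(i < size gens) c i * gens`_i.

Definition colon (I : S -> Prop) (f : S) : S -> Prop := fun g => I (g * f).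

Definition prime_ideal (P : S -> Prop) : Prop :=
  is_ideal P /\ ~ P 1 /\ (forall a b, P (a * b) -> P a \/ P b).

Definition same_ideal (I J : S -> Prop) : Prop := forall g, I g <-> J g.

(* Ass(S/I): primes that are annihilators (I : g) of elements g + I of S/I *)
Definition Ass (I : S -> Prop) (P : S -> Prop) : Prop :=
  prime_ideal P /\ exists g : S, same_ideal (colon I g) P.

Definition vnum_witness (I : S -> Prop) (k : nat) : Prop :=
  exists f : S, f \is k.-homog /\
    exists P, Ass I P /\ same_ideal (colon I f) P.

Definition is_vnumber (I : S -> Prop) (k : nat) : Prop :=
  vnum_witness I k /\ forall j, vnum_witness I j -> (k <= j)%N.

Definition edge_ideal (e : rel 'I_N) : S -> Prop :=
  ideal_gen [seq 'X_(p.1) * 'X_(p.2) | p <- enum [pred p : 'I_N * 'I_N | e p.1 p.2]].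

Definition is_vnumber_graph (e : rel 'I_N) (k : nat) : Prop :=
  is_vnumber (edge_ideal e) k.

End VNumber.
Local Close Scope ring_scope.
Local Open Scope nat_scope.

Definition cycle_rel (n : nat) : rel 'I_n :=
  fun i j => (val j == ((val i).+1 %% n)%N) || (val i == (val j).+1 %% n).

Definition path_rel (k : nat) : rel 'I_k :=
  fun i j => (val j == (val i).+1) || (val i == (val j).+1).

(* H: C_n on vertices 0..n-1; P_m = y_1 ... y_m with y_1 identified with
   vertex 0 of C_n and y_(t+2) being vertex n+t (t = 0..m-2). *)
Definition clique_sum_base (n m : nat) (i j : 'I_(n + m - 1)) : bool :=
  [&& (val i < n)%N, (val j < n)%N & val j == ((val i).+1 %% n)%N]
  || ((val i == 0%N) && (val j == n :> nat))
  || ((n <= val i)%N && (val j == (val i).+1)).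

Definition cycle_path_rel (n m : nat) : rel 'I_(n + m - 1) :=
  fun i j => @clique_sum_base n m i j || @clique_sum_base n m j i.

Arguments cycle_rel n : clear implicits.
Arguments path_rel k : clear implicits.
Arguments cycle_path_rel n m : clear implicits.

(* Following Jaramillo and Villarreal, v(I(G)) is the least size of an
   independent set A whose neighbourhood N(A) is a vertex cover: for such A the
   colon ideal (I(G) : x^A) is the prime ideal generated by the variables of
   N(A), and conversely, if (I(G) : f) = P with f homogeneous, some monomial u
   of f outside I(G) is such that every monomial pushing u into I(G) involves a
   variable of P; the support of u is then such a set, of size at most deg f.
   For H, a set for C_n rotated so as to contain the glued vertex y_1, together
   with a set for the path y_3 ... y_m, is a set for H.  Conversely, the traces
   of a set for H on C_n and on y_3 ... y_m are independent, and their
   neighbourhoods cover every edge except possibly those at y_1 and y_3 when y_2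
   is in the set; adding y_1 and y_3 in that case gives the lower bound. *)

From mathcomp Require Import all_boot all_algebra.
From mathcomp Require Import mpoly.
From mathcomp Require Import zify.
From Stdlib Require Import Classical.
Set Implicit Arguments. Unset Strict Implicit. Unset Printing Implicit Defensive.
Import GRing.Theory.

Section IndepNbhdCover.
Variables (N : nat) (e : rel 'I_N).
Implicit Types A B C : {set 'I_N}.

Definition indep A := [forall i in A, forall j in A, ~~ e i j].
Definition nbhd A := [set j | [exists i in A, e i j]].
Definition vcover C := [forall i, forall j, e i j ==> (i \in C) || (j \in C)].
Definition indep_nbhd_cover A := indep A && vcover (nbhd A).

Lemma indepP A : reflect {in A &, forall i j, ~~ e i j} (indep A).
Proof.
apply: (iffP forall_inP) => [h i j iA jA | h i iA]; first exact: (forall_inP (h i iA)).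
by apply/forall_inP => j; apply: h.
Qed.

Lemma nbhdP A j : reflect (exists2 i, i \in A & e i j) (j \in nbhd A).
Proof. by rewrite inE; apply: exists_inP. Qed.

Lemma vcoverP C : reflect (forall i j, e i j -> (i \in C) || (j \in C)) (vcover C).
Proof.
apply: (iffP forallP) => [h i j eij | h i]; first exact: (implyP (forallP (h i) j)).
by apply/forallP => j; apply/implyP/h.
Qed.

Lemma nbhdS A B : A \subset B -> nbhd A \subset nbhd B.
Proof.
move=> /subsetP AB; apply/subsetP => j /nbhdP [i /AB iB eij].
by apply/nbhdP; exists i.
Qed.

Hypothesis e_irr : irreflexive e.
Hypothesis e_sym : ssrbool.symmetric e.

Lemma maxset_indep_nbhd_cover A : maxset indep A -> indep_nbhd_cover A.
Proof.
case/maxsetP => indA maxA; rewrite /indep_nbhd_cover indA.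
have outA_nbhd v : v \notin A -> v \in nbhd A.
  move=> vA; apply/nbhdP; apply/exists_inP; apply: contraNT vA => /exists_inPn nv.
  have indvA : indep (v |: A).
    apply/indepP => i j; rewrite !inE => /predU1P [-> | iA] /predU1P [-> | jA].
    - by rewrite e_irr.
    - by rewrite e_sym nv.
    - by rewrite nv.
    - exact: (indepP _ indA).
  by rewrite -(maxA _ indvA (subsetUr _ _)) setU11.
apply/vcoverP => i j eij; have [iA|/outA_nbhd -> //] := boolP (i \in A).
have [jA|/outA_nbhd -> //] := boolP (j \in A); last by rewrite orbT.
by move: (indepP _ indA i j iA jA); rewrite eij.
Qed.

Lemma indep_nbhd_cover_min :
  exists A0, indep_nbhd_cover A0 /\ forall B, indep_nbhd_cover B -> #|A0| <= #|B|.
Proof.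
have indep0 : indep set0 by apply/indepP => i; rewrite inE.
have [A1 /maxset_indep_nbhd_cover cov1 _] := maxset_exists indep0.
by case: (arg_minnP (fun B => #|B|) cov1) => A0 covA0 minA0; exists A0.
Qed.

Lemma indep_nbhd_cover_extend B x (b : bool) : indep B ->
  (forall i j, e i j -> [|| i \in nbhd B, j \in nbhd B | b && ((i == x) || (j == x))]) ->
  exists2 B', indep_nbhd_cover B' & #|B'| <= #|B| + b.
Proof.
move=> indB covB; case: b covB => covB; last first.
  exists B; rewrite ?addn0 // /indep_nbhd_cover indB.
  by apply/vcoverP => i j /covB; rewrite orbF.
have [xN|xN] := boolP (x \in nbhd B).
  exists B; rewrite ?leq_addr // /indep_nbhd_cover indB.
  by apply/vcoverP => i j /covB /or3P [->|->|/orP [] /eqP ->]; rewrite ?xN ?orbT.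
exists (x |: B); last by rewrite cardsU1 addnC leq_add2l leq_b1.
have subN := subsetP (nbhdS (subsetUr [set x] B)).
rewrite /indep_nbhd_cover; apply/andP; split.
  apply/indepP => i j; rewrite !inE => /predU1P [-> | iB] /predU1P [-> | jB].
  - by rewrite e_irr.
  - by apply: contraNN xN => exj; apply/nbhdP; exists j; rewrite // e_sym.
  - by apply: contraNN xN => eix; apply/nbhdP; exists i.
  - exact: (indepP _ indB).
apply/vcoverP => i j eij; case/or3P: (covB i j eij) => [/subN ->|/subN ->|] //.
  by rewrite orbT.
by case/orP => /eqP xE; subst x; apply/orP; [right|left]; apply/nbhdP;
  [exists i | exists j]; rewrite ?setU11 // e_sym.
Qed.

End IndepNbhdCover.

Section GraphEmbedding.
Variables (N M : nat) (e : rel 'I_N) (e' : rel 'I_M) (f : 'I_N -> 'I_M).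
Hypothesis f_mono : {mono f : i j / e i j >-> e' i j}.
Implicit Types (A : {set 'I_M}) (B : {set 'I_N}).

Lemma indep_imset B : indep e B -> indep e' (f @: B).
Proof.
move=> /indepP indB; apply/indepP => _ _ /imsetP [i iB ->] /imsetP [j jB ->].
by rewrite f_mono; apply: indB.
Qed.

Lemma indep_preimset A : indep e' A -> indep e (f @^-1: A).
Proof. by move=> /indepP indA; apply/indepP => i j; rewrite !inE -f_mono; apply: indA. Qed.

Lemma mem_nbhd_imset B i : i \in nbhd e B -> f i \in nbhd e' (f @: B).
Proof. by case/nbhdP => a aB eai; apply/nbhdP; exists (f a); rewrite ?imset_f ?f_mono. Qed.

End GraphEmbedding.

Lemma indep_nbhd_cover_imset N (e : rel 'I_N) (s t : 'I_N -> 'I_N) A :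
  cancel t s -> {mono s : i j / e i j} ->
  indep_nbhd_cover e A -> indep_nbhd_cover e (s @: A).
Proof.
move=> ts es /andP [indA /vcoverP covA]; rewrite /indep_nbhd_cover (indep_imset es) //.
apply/vcoverP => i j; rewrite -(ts i) -(ts j) es => /covA.
by case/orP => /(mem_nbhd_imset es) ->; rewrite ?orbT.
Qed.

Local Open Scope ring_scope.

Section MonomialIdeal.
Variables (K : fieldType) (N : nat).
Local Notation S := {mpoly K[N]}.
Implicit Types (Q : pred 'X_{1..N}) (C : {set 'I_N}) (m w u : 'X_{1..N}) (p q g : S).

Definition mono_ideal Q g : bool := all Q (msupp g).

Definition mpart Q p : S := \sum_(m <- msupp p | Q m) p@_m *: 'X_[m].

Lemma msupp_mpart Q p m : m \in msupp (mpart Q p) -> Q m && (m \in msupp p).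
Proof.
move/msupp_sum_le => /flattenP [_ /mapP [m' hm' ->]].
move=> /msuppZ_le; rewrite msuppX mem_seq1 => /eqP ->.
by move: hm'; rewrite mem_filter andbC.
Qed.

Lemma mpartE Q p : p = mpart Q p + mpart (predC Q) p.
Proof. by rewrite {1}[p]mpolyE (bigID Q). Qed.

Lemma mono_ideal_mpart Q p : mono_ideal Q (mpart Q p).
Proof. by apply/allP => m /msupp_mpart /andP []. Qed.

Lemma mono_ideal0 Q : mono_ideal Q 0.
Proof. by rewrite /mono_ideal msupp0. Qed.

Lemma mono_idealD Q p q : mono_ideal Q p -> mono_ideal Q q -> mono_ideal Q (p + q).
Proof.
move=> /allP hp /allP hq; apply/allP => m /msuppD_le.
by rewrite mem_cat => /orP [/hp|/hq].
Qed.

Lemma mono_idealN Q p : mono_ideal Q (- p) = mono_ideal Q p.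
Proof. exact: perm_all (msuppN p). Qed.

Lemma mono_ideal_mulX Q g u :
  mono_ideal Q (g * 'X_[u]) = all (fun m => Q (m + u)%MM) (msupp g).
Proof.
rewrite /mono_ideal (perm_all _ (msuppMX _ _)) all_map.
by apply: eq_all => m /=; rewrite addmC.
Qed.

Lemma mono_ideal_sum Q (I : Type) (r : seq I) (F : I -> S) :
  (forall i, mono_ideal Q (F i)) -> mono_ideal Q (\sum_(i <- r) F i).
Proof.
by move=> h; elim/big_ind: _ => //; [exact: mono_ideal0 | exact: mono_idealD].
Qed.

Section UpClosed.
Variable Q : pred 'X_{1..N}.
Hypothesis Q_up : forall m w, Q m -> Q (m + w)%MM.

Lemma mono_idealMl p q : mono_ideal Q q -> mono_ideal Q (p * q).
Proof.
move=> /allP hq; apply/allP => _ /msuppM_le /allpairsP [[m1 m2] /= [_ h2 ->]].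
by rewrite addmC; apply/Q_up/hq.
Qed.

Lemma mono_ideal_mpartC p q :
  mono_ideal Q (q * p) = mono_ideal Q (q * mpart (predC Q) p).
Proof.
rewrite {1}(mpartE Q p) mulrDr; apply/idP/idP => h.
  rewrite -[X in mono_ideal _ X](addKr (q * mpart Q p)) mono_idealD //.
  by rewrite mono_idealN mono_idealMl ?mono_ideal_mpart.
by rewrite mono_idealD // mono_idealMl ?mono_ideal_mpart.
Qed.

Lemma mono_ideal_is_ideal : is_ideal (fun g : S => mono_ideal Q g).
Proof. by split; [exact: mono_ideal0 | split; [exact: mono_idealD | exact: mono_idealMl]]. Qed.

End UpClosed.

Lemma mono_ideal_prime Q :
  (forall m w, Q (m + w)%MM = Q m || Q w) -> ~~ Q 0%MM ->
  prime_ideal (fun g : S => mono_ideal Q g).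
Proof.
move=> QD nQ0; have Q_up m w : Q m -> Q (m + w)%MM by rewrite QD => ->.
split; first exact: mono_ideal_is_ideal.
split; first by apply/negP; rewrite /mono_ideal msupp1 /= andbT.
move=> a b hab; have [|na] := boolP (mono_ideal Q a); first by left.
have [|nb] := boolP (mono_ideal Q b); first by right.
exfalso.
(* Strip a and b of their monomials in Q: the product of the remainders lies in
   the ideal, yet its leading monomial is a sum of two monomials outside Q. *)
set a0 := mpart (predC Q) a; set b0 := mpart (predC Q) b.
have nz0 p : ~~ mono_ideal Q p -> mpart (predC Q) p != 0.
  apply: contra => /eqP p0; rewrite [p](mpartE Q) p0 addr0; exact: mono_ideal_mpart.
have notQ_lead p : ~~ mono_ideal Q p -> ~~ Q (mlead (mpart (predC Q) p)).
  by move/nz0/mlead_supp/msupp_mpart/andP => [].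
have : mono_ideal Q (a0 * b0).
  by rewrite -(mono_ideal_mpartC Q_up) mulrC -(mono_ideal_mpartC Q_up) mulrC.
move/allP/(_ _ (mlead_supp (mulf_neq0 (nz0 _ na) (nz0 _ nb)))).
by rewrite mleadM ?nz0 // QD; apply/negP/norP; split; exact: notQ_lead.
Qed.

Definition mnm_supp m : {set 'I_N} := [set i | 0 < m i]%N.

Definition mnm_meets C m : bool := [exists i in C, 0 < m i]%N.

Lemma card_mnm_supp m : (#|mnm_supp m| <= mdeg m)%N.
Proof.
rewrite mdegE -sum1_card big_mkcond /=; apply: leq_sum => i _.
by rewrite inE; case: (m i).
Qed.

Lemma mnm_meetsD C m w : mnm_meets C (m + w)%MM = mnm_meets C m || mnm_meets C w.
Proof.
apply/exists_inP/orP => [[i iC] | [] /exists_inP [i iC mi]]; last 2 first.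
- by exists i; rewrite // mnmDE ltn_addr.
- by exists i; rewrite // mnmDE ltn_addl.
by rewrite mnmDE addn_gt0 => /orP [] mi; [left|right]; apply/exists_inP; exists i.
Qed.

Lemma var_ideal_prime C : prime_ideal (fun g : S => mono_ideal (mnm_meets C) g).
Proof.
apply: mono_ideal_prime; first exact: mnm_meetsD.
by apply/exists_inP => -[i _]; rewrite mnm0E.
Qed.

End MonomialIdeal.

Section EdgeIdeal.
Variables (K : fieldType) (N : nat).
Local Notation S := {mpoly K[N]}.
Implicit Types (m w : 'X_{1..N}) (g : S).

Lemma ideal_gen_is_ideal (gs : seq S) : is_ideal (ideal_gen gs).
Proof.
split; first by exists (fun _ => 0); rewrite big1 // => i _; rewrite mul0r.
split.
  move=> a b [ca ->] [cb ->]; exists (fun i => ca i + cb i).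
  by rewrite -big_split; apply: eq_bigr => i _; rewrite mulrDl.
move=> r a [ca ->]; exists (fun i => r * ca i).
by rewrite mulr_sumr; apply: eq_bigr => i _; rewrite mulrA.
Qed.

Lemma ideal_gen_mem (gs : seq S) g : g \in gs -> ideal_gen gs g.
Proof.
move=> gin; have ilt : (index g gs < size gs)%N by rewrite index_mem.
exists (fun i => (i == index g gs)%:R).
rewrite (bigD1 (Ordinal ilt)) //= eqxx mul1r nth_index // big1 ?addr0 //.
by move=> i neq; rewrite -val_eqE /= in neq; rewrite (negbTE neq) mul0r.
Qed.

Variable e : rel 'I_N.

Definition has_edge m : bool := [exists i, exists j, [&& e i j, 0 < m i & 0 < m j]]%N.

Lemma has_edge_le m m' : (m <= m')%MM -> has_edge m -> has_edge m'.
Proof.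
move=> /mnm_lepP le /existsP [i /existsP [j /and3P [eij mi mj]]].
apply/existsP; exists i; apply/existsP; exists j.
by rewrite eij (leq_trans mi (le i)) (leq_trans mj (le j)).
Qed.

Lemma has_edge_addr m w : has_edge m -> has_edge (m + w)%MM.
Proof. exact/has_edge_le/lem_addr. Qed.

Hypothesis e_irr : irreflexive e.

Lemma edge_idealE g : edge_ideal e g <-> mono_ideal has_edge g.
Proof.
have [I0 [I_add I_mul]] : is_ideal (edge_ideal e) := ideal_gen_is_ideal _.
split.
  case=> c ->; apply: mono_ideal_sum => i.
  apply: (mono_idealMl has_edge_addr).
  case/mapP: (mem_nth 0 (ltn_ord i)) => [[a b]]; rewrite mem_enum inE /= => eab ->.
  rewrite -mpolyXD /mono_ideal msuppX /= andbT; apply/existsP; exists a.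
  by apply/existsP; exists b; rewrite eab !mnmDE !mnm1E !eqxx addn1 add1n.
move=> /allP hg; rewrite [g]mpolyE; elim/big_ind: _ => // m _.
have [/hg|/memN_msupp_eq0 ->] := boolP (m \in msupp g); last by rewrite scale0r.
case/existsP=> i /existsP [j /and3P [eij mi mj]].
have nij : i != j by apply: contraTneq eij => ->; rewrite e_irr.
have le : (U_(i) + U_(j) <= m)%MM.
  apply/mnm_lepP => k; rewrite mnmDE !mnm1E.
  have [<-|_] := eqVneq i k; first by rewrite eq_sym (negbTE nij).
  by case: eqVneq => [<-|].
rewrite -(submK le) mpolyXD mpolyXD scalerAl; apply: I_mul; apply: ideal_gen_mem.
by apply/mapP; exists (i, j); rewrite ?mem_enum.
Qed.

End EdgeIdeal.

Section PrimeIdeal.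
Variables (K : fieldType) (N : nat) (P : {mpoly K[N]} -> Prop).
Hypothesis P_prime : prime_ideal P.

Lemma prime_ideal_prod (I : Type) (r : seq I) (F : I -> {mpoly K[N]}) :
  P (\prod_(i <- r) F i) -> exists i, P (F i).
Proof.
have [_ [P1 PM]] := P_prime; elim: r => [|x r IHr]; first by rewrite big_nil.
by rewrite big_cons => /PM [Px | /IHr //]; exists x.
Qed.

Lemma prime_ideal_expr x k : P (x ^+ k) -> P x /\ (0 < k)%N.
Proof.
have [_ [P1 PM]] := P_prime; elim: k => [|k IHk]; first by rewrite expr0.
by rewrite exprS => /PM [|/IHk []].
Qed.

Lemma prime_ideal_mpolyX w : P 'X_[w] -> exists i, P 'X_i /\ (0 < w i)%N.
Proof.
rewrite mpolyXE_id => /prime_ideal_prod [i /prime_ideal_expr Pi].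
by exists i.
Qed.

Variable Q : pred 'X_{1..N}.
Hypothesis Q_up : forall m w, Q m -> Q (m + w)%MM.

Lemma mnm_shift_combine (Z : 'I_N -> Prop) (s : seq 'X_{1..N}) :
  (forall u, u \in s -> exists w : 'X_{1..N}, Q (u + w)%MM /\ forall i, Z i -> w i = 0%N) ->
  exists w : 'X_{1..N}, (forall i, Z i -> w i = 0%N) /\ forall u, u \in s -> Q (u + w)%MM.
Proof.
elim: s => [|u0 s IHs] hs; first by exists 0%MM; split => // i _; rewrite mnm0E.
have [w0 [Qw0 Zw0]] := hs u0 (mem_head _ _).
have [|w [Zw Qw]] := IHs; first by move=> u us; apply: hs; rewrite inE us orbT.
exists (w0 + w)%MM; split => [i Zi | u]; first by rewrite mnmDE Zw0 ?Zw.
rewrite inE => /predU1P [-> | /Qw Qu]; first by rewrite addmA; apply: Q_up.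
by rewrite [(w0 + w)%MM]addmC addmA; apply: Q_up.
Qed.

Lemma prime_colon_mono_ideal (f : {mpoly K[N]}) :
  (forall g, P g <-> mono_ideal Q (g * f)) ->
  exists2 u, u \in msupp f &
    forall w : 'X_{1..N}, Q (u + w)%MM -> exists i, P 'X_i /\ (0 < w i)%N.
Proof.
(* Otherwise each monomial of f is pushed into Q by a monomial avoiding the
   variables in P; a common such monomial w puts 'X_[w] in P, hence one of its
   variables. *)
move=> Pf; apply: NNPP => noU.
have avoidP u : u \in msupp f ->
    exists w : 'X_{1..N}, Q (u + w)%MM /\ forall i, P 'X_i -> w i = 0%N.
  move=> uf; apply: NNPP => noW; apply: noU; exists u => // w Quw.
  apply: NNPP => noI; apply: noW; exists w; split => // i Pi.
  by apply/eqP; rewrite -leqn0 leqNgt; apply/negP => wi; apply: noI; exists i.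
have [w [Pw0 Qw]] := mnm_shift_combine avoidP.
have [|i [Pi]] := @prime_ideal_mpolyX w; last by rewrite Pw0.
by apply/Pf; rewrite mulrC mono_ideal_mulX; apply/allP.
Qed.

End PrimeIdeal.

Section VNumberGraph.
Variables (K : fieldType) (N : nat) (e : rel 'I_N).
Hypothesis e_irr : irreflexive e.
Hypothesis e_sym : ssrbool.symmetric e.
Implicit Types (A : {set 'I_N}) (m u : 'X_{1..N}).

Lemma indep_mnm_supp m : ~~ has_edge e m -> indep e (mnm_supp m).
Proof.
move=> noedge; apply/indepP => i j; rewrite !inE => mi mj; apply: contra noedge => eij.
by apply/existsP; exists i; apply/existsP; exists j; rewrite eij mi mj.
Qed.

Lemma has_edge_add_mesym1 A : indep_nbhd_cover e A ->
  forall m, has_edge e (m + mesym1 A)%MM = mnm_meets (nbhd e A) m.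
Proof.
case/andP => /indepP indA /vcoverP covA m; apply/idP/exists_inP.
  case/existsP=> i /existsP [j /and3P [eij]]; rewrite !mnmDE !mnmE.
  case iA: (i \in A); case jA: (j \in A); rewrite ?addn0 ?addn1 // => mi mj.
  - by move: (indA i j iA jA); rewrite eij.
  - by exists j; rewrite // inE; apply/exists_inP; exists i.
  - by exists i; rewrite // inE; apply/exists_inP; exists j; rewrite // e_sym.
  - by case/orP: (covA i j eij); [exists i | exists j].
case=> k /nbhdP [a aA eak] mk; apply/existsP; exists a; apply/existsP; exists k.
by rewrite eak !mnmDE !mnmE aA addn1 ltn_addr.
Qed.

Lemma has_edge_add_var u i :
  ~~ has_edge e u -> has_edge e (u + U_(i))%MM -> i \in nbhd e (mnm_supp u).
Proof.
move=> noedge /existsP [a /existsP [b]]; rewrite !mnmDE !mnm1E.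
have [<-|_] := eqVneq i a; have [<-|_] := eqVneq i b; rewrite ?addn0.
- by rewrite e_irr.
- by case/and3P => eib _ ub; apply/nbhdP; exists b; rewrite ?inE // e_sym.
- by case/and3P => eai ua _; apply/nbhdP; exists a; rewrite ?inE.
case/and3P => eab ua ub; case/negP: noedge.
by apply/existsP; exists a; apply/existsP; exists b; rewrite eab ua ub.
Qed.

Lemma vnum_witness_indep_nbhd_cover A :
  indep_nbhd_cover e A -> vnum_witness (@edge_ideal K N e) #|A|.
Proof.
move=> covA; exists 'X_[mesym1 A]; split.
  by rewrite dhomogE msuppX /= andbT mdeg_mesym1.
pose PA (g : {mpoly K[N]}) : Prop := mono_ideal (mnm_meets (nbhd e A)) g.
have colonE : same_ideal (colon (@edge_ideal K N e) 'X_[mesym1 A]) PA.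
  move=> g; rewrite /colon edge_idealE // mono_ideal_mulX.
  by rewrite (eq_all (has_edge_add_mesym1 covA)).
by exists PA; split=> //; split; [exact: var_ideal_prime | exists 'X_[mesym1 A]].
Qed.

Lemma indep_nbhd_cover_of_vnum_witness k : vnum_witness (@edge_ideal K N e) k ->
  exists2 A, indep_nbhd_cover e A & (#|A| <= k)%N.
Proof.
case=> f [hom_f [P [[P_prime _] colonP]]].
pose f1 := mpart (predC (has_edge e)) f.
have Pf1 g : P g <-> mono_ideal (has_edge e) (g * f1).
  rewrite -(mono_ideal_mpartC (@has_edge_addr _ e)) -edge_idealE //.
  exact: iff_sym (colonP g).
have [u uf1 hu] := prime_colon_mono_ideal P_prime (@has_edge_addr _ e) Pf1.
have /andP [/= noedge uf] := msupp_mpart uf1.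
have PX_nbhd i : P 'X_i -> i \in nbhd e (mnm_supp u).
  move=> /Pf1; rewrite mulrC mono_ideal_mulX => /allP /(_ u uf1).
  exact: has_edge_add_var.
exists (mnm_supp u); last first.
  by move: hom_f; rewrite dhomogE => /allP /(_ _ uf) /eqP <-; apply: card_mnm_supp.
rewrite /indep_nbhd_cover indep_mnm_supp //; apply/vcoverP => i j eij.
have [|l [/PX_nbhd Nl]] := hu (U_(i) + U_(j))%MM.
  apply: (has_edge_le (lem_addl u _)); apply/existsP; exists i; apply/existsP; exists j.
  by rewrite eij !mnmDE !mnm1E !eqxx addn1 add1n.
rewrite mnmDE !mnm1E.
have [->|_] := eqVneq i l; first by rewrite Nl.
by have [->|_] := eqVneq j l; rewrite ?Nl ?orbT.
Qed.

Lemma is_vnumber_graph_min_cover :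
  exists A0, [/\ @is_vnumber_graph K N e #|A0|, indep_nbhd_cover e A0 &
    forall B, indep_nbhd_cover e B -> (#|A0| <= #|B|)%N].
Proof.
have [A0 [covA0 minA0]] := indep_nbhd_cover_min e_irr e_sym.
exists A0; split=> //; split; first exact: vnum_witness_indep_nbhd_cover.
move=> j /indep_nbhd_cover_of_vnum_witness [B covB leB].
exact: leq_trans (minA0 _ covB) leB.
Qed.

End VNumberGraph.

Local Close Scope ring_scope.

Lemma path_rel_sym k : ssrbool.symmetric (path_rel k).
Proof. by move=> s t; rewrite /path_rel orbC. Qed.

Lemma path_rel_irr k : irreflexive (path_rel k).
Proof. move=> t; rewrite /path_rel; lia. Qed.

Section Cycle.
Variable n : nat.
Hypothesis n_gt1 : 1 < n.
Local Notation eC := (cycle_rel n).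

Lemma cycle_rel_sym : ssrbool.symmetric eC.
Proof. by move=> i j; rewrite /cycle_rel orbC. Qed.

Lemma cycle_rel_irr : irreflexive eC.
Proof.
move=> [i +]; rewrite /cycle_rel /= orbb.
rewrite leq_eqVlt => /predU1P [i_last | /modn_small ->]; last by lia.
by rewrite i_last modnn; lia.
Qed.

Definition rot (c : nat) (i : 'I_n) : 'I_n := Ordinal (ltn_pmod (i + c) (ltnW n_gt1)).

Lemma rotK c : c <= n -> cancel (rot c) (rot (n - c)).
Proof.
move=> le_cn i; apply: val_inj => /=.
by rewrite modnDml -addnA subnKC // modnDr modn_small.
Qed.

Lemma cycle_rel_rot c : {mono rot c : i j / eC i j}.
Proof.
have succ_mod x y : (y + c == ((x + c) %% n).+1 %[mod n]) = (y == x.+1 %[mod n]).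
  by rewrite -addn1 modnDml addnAC eqn_modDr addn1.
by move=> i j; rewrite /cycle_rel /= !succ_mod !(modn_small (ltn_ord _)).
Qed.

Lemma indep_nbhd_cover_cycle_transitive A v : indep_nbhd_cover eC A ->
  exists A', [/\ indep_nbhd_cover eC A', #|A'| = #|A| & v \in A'].
Proof.
move=> covA; have [a aA] : exists a, a \in A.
  have e01 : eC (Ordinal (ltnW n_gt1)) (Ordinal n_gt1).
    by rewrite /cycle_rel /= modn_small ?eqxx.
  case/andP: covA => _ /vcoverP /(_ _ _ e01).
  by case/orP => /nbhdP [a aA _]; exists a.
pose c := (v + (n - a)) %% n; have le_cn : c <= n by rewrite ltnW ?ltn_pmod ?(ltnW n_gt1).
have rotKV : cancel (rot (n - c)) (rot c) by have := rotK (leq_subr c n); rewrite subKn.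
exists (rot c @: A); split.
- exact: indep_nbhd_cover_imset rotKV (@cycle_rel_rot c) covA.
- exact/card_imset/(can_inj (rotK le_cn)).
- apply/imsetP; exists a => //; apply: val_inj => /=.
  by rewrite modnDmr addnCA subnKC ?modnDr ?modn_small // ltnW.
Qed.

End Cycle.

Section CyclePathSum.
Variables (n m : nat).
Hypotheses (n_ge3 : 3 <= n) (m_ge3 : 3 <= m).

Local Notation NH := (n + m - 1).
Local Notation k := (m - 2).
Local Notation eC := (cycle_rel n).
Local Notation eP := (path_rel k).
Local Notation eH := (cycle_path_rel n m).

Let n_gt1 : 1 < n := ltnW n_ge3.

Lemma cyc_subproof (i : 'I_n) : i < NH. Proof. have := ltn_ord i; lia. Qed.
Lemma y2_subproof : n < NH. Proof. lia. Qed.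
Lemma pth_subproof (t : 'I_k) : n + 1 + t < NH. Proof. have := ltn_ord t; lia. Qed.

(* In the notation of the statement, [cyc 0], [y2] and [pth t] are the
   vertices y_1, y_2 and y_(t+3) of the pendant path. *)
Definition cyc (i : 'I_n) : 'I_NH := Ordinal (cyc_subproof i).
Definition y2 : 'I_NH := Ordinal y2_subproof.
Definition pth (t : 'I_k) : 'I_NH := Ordinal (pth_subproof t).

Variant cycle_path_vertex_spec : 'I_NH -> Type :=
  | VertexCyc i : cycle_path_vertex_spec (cyc i)
  | VertexY2 : cycle_path_vertex_spec y2
  | VertexPth t : cycle_path_vertex_spec (pth t).

Lemma cycle_path_vertexP x : cycle_path_vertex_spec x.
Proof.
have x_lt := ltn_ord x; case: (ltngtP x n) => [x_lt_n | n_lt_x | x_eq_n].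
- have -> : x = cyc (Ordinal x_lt_n) by apply: val_inj.
  exact: VertexCyc.
- have t_lt : x - n - 1 < k by lia.
  have -> : x = pth (Ordinal t_lt) by apply: val_inj => /=; lia.
  exact: VertexPth.
- have -> : x = y2 by apply: val_inj.
  exact: VertexY2.
Qed.

Lemma cyc_inj : injective cyc.
Proof. by move=> i j /(congr1 val) /= /val_inj. Qed.

Lemma pth_inj : injective pth.
Proof. by move=> s t /(congr1 val) /= st; apply: val_inj => /=; lia. Qed.

Lemma cycle_path_rel_sym : ssrbool.symmetric eH.
Proof. by move=> x y; rewrite /cycle_path_rel orbC. Qed.

Lemma cycle_path_rel_cyc i j : eH (cyc i) (cyc j) = eC i j.
Proof.
rewrite /cycle_path_rel /clique_sum_base /cycle_rel /= !ltn_ord /=.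
have := ltn_ord i; have := ltn_ord j; lia.
Qed.

Lemma cycle_path_rel_pth s t : eH (pth s) (pth t) = eP s t.
Proof.
rewrite /cycle_path_rel /clique_sum_base /path_rel /=.
have := ltn_ord s; have := ltn_ord t; lia.
Qed.

Lemma cycle_path_rel_cyc_pth i t : eH (cyc i) (pth t) = false.
Proof.
rewrite /cycle_path_rel /clique_sum_base /=.
have := ltn_ord i; have := ltn_ord t; lia.
Qed.

Lemma cycle_path_rel_y2_cyc i : eH y2 (cyc i) = (val i == 0).
Proof. rewrite /cycle_path_rel /clique_sum_base /=; have := ltn_ord i; lia. Qed.

Lemma cycle_path_rel_y2_pth t : eH y2 (pth t) = (val t == 0).
Proof. rewrite /cycle_path_rel /clique_sum_base /=; have := ltn_ord t; lia. Qed.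

Lemma cycle_path_rel_irr : irreflexive eH.
Proof.
case/cycle_path_vertexP => [i||t].
- by rewrite cycle_path_rel_cyc cycle_rel_irr.
- by rewrite /cycle_path_rel /clique_sum_base /=; lia.
- by rewrite cycle_path_rel_pth path_rel_irr.
Qed.

Lemma p0_subproof : 0 < k. Proof. by rewrite subn_gt0. Qed.

Definition c0 : 'I_n := Ordinal (ltnW n_gt1).
Definition p0 : 'I_k := Ordinal p0_subproof.

Lemma cycle_path_upper A1 A2 :
  indep_nbhd_cover eC A1 -> indep_nbhd_cover eP A2 ->
  exists2 A, indep_nbhd_cover eH A & #|A| <= #|A1| + #|A2|.
Proof.
case/(indep_nbhd_cover_cycle_transitive n_gt1 c0) => A1'.
case=> /andP [/indepP indA1 /vcoverP covA1] <- c0A1.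
case/andP => /indepP indA2 /vcoverP covA2.
have [eCH ePH] := (cycle_path_rel_cyc, cycle_path_rel_pth).
pose A := cyc @: A1' :|: pth @: A2; exists A; last first.
  by rewrite cardsU (card_imset _ cyc_inj) (card_imset _ pth_inj) leq_subr.
have y2N : y2 \in nbhd eH A.
  apply/nbhdP; exists (cyc c0); first by rewrite inE imset_f.
  by rewrite cycle_path_rel_sym cycle_path_rel_y2_cyc.
apply/andP; split.
  apply/indepP => x y; rewrite !inE.
  case/orP => /imsetP [i iA ->] /orP [] /imsetP [j jA ->].
  - by rewrite eCH indA1.
  - by rewrite cycle_path_rel_cyc_pth.
  - by rewrite cycle_path_rel_sym cycle_path_rel_cyc_pth.
  - by rewrite ePH indA2.
have NC i : i \in nbhd eC A1' -> cyc i \in nbhd eH A.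
  by move/(mem_nbhd_imset eCH); apply/subsetP/nbhdS/subsetUl.
have NP t : t \in nbhd eP A2 -> pth t \in nbhd eH A.
  by move/(mem_nbhd_imset ePH); apply/subsetP/nbhdS/subsetUr.
apply/vcoverP => x y; case: x / cycle_path_vertexP => [i||s]; rewrite ?y2N //;
  case: y / cycle_path_vertexP => [j||t]; rewrite ?y2N ?orbT //.
- by rewrite eCH => /covA1 /orP [] /NC ->; rewrite ?orbT.
- by rewrite cycle_path_rel_cyc_pth.
- by rewrite cycle_path_rel_sym cycle_path_rel_cyc_pth.
- by rewrite ePH => /covA2 /orP [] /NP ->; rewrite ?orbT.
Qed.

Lemma card_cycle_path_parts (A : {set 'I_NH}) :
  #|cyc @^-1: A| + #|pth @^-1: A| + (y2 \in A) <= #|A|.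
Proof.
pose U := cyc @: (cyc @^-1: A) :|: pth @: (pth @^-1: A).
have cardU : #|U| = #|cyc @^-1: A| + #|pth @^-1: A|.
  rewrite cardsU (card_imset _ cyc_inj) (card_imset _ pth_inj).
  rewrite (_ : _ :&: _ = set0) ?cards0 ?subn0 //.
  apply/setP => x; rewrite !inE; apply/andP => -[/imsetP [i _ ->] /imsetP [t _]].
  by move/(congr1 val) => /=; have := ltn_ord i; lia.
have UA : U \subset A.
  by rewrite subUset; apply/andP; split; apply/subsetP => _ /imsetP [x + ->]; rewrite inE.
have y2U : y2 \notin U.
  rewrite !inE; apply/norP; split; apply/imsetP => -[x _ /(congr1 val)] /=.
    by have := ltn_ord x; lia.
  by lia.
rewrite -cardU; have [y2A|_] := boolP (y2 \in A); last by rewrite addn0 subset_leq_card.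
have y2UA : y2 |: U \subset A by rewrite subUset sub1set y2A UA.
by apply: leq_trans (subset_leq_card y2UA); rewrite cardsU1 y2U addnC.
Qed.

Lemma cycle_path_lower A : indep_nbhd_cover eH A ->
  exists B1 B2, [/\ indep_nbhd_cover eC B1, indep_nbhd_cover eP B2 &
    #|B1| + #|B2| <= #|A| + 1].
Proof.
case/andP => indA /vcoverP covA.
have [eCH ePH] := (cycle_path_rel_cyc, cycle_path_rel_pth).
pose b := y2 \in A.
have NC i : cyc i \in nbhd eH A -> (i \in nbhd eC (cyc @^-1: A)) || (b && (i == c0)).
  case/nbhdP => x; case: x / cycle_path_vertexP => [j||t] xA.
  - by rewrite eCH => eji; apply/orP; left; apply/nbhdP; exists j; rewrite ?inE.
  - by rewrite cycle_path_rel_y2_cyc /b xA => /eqP i0; rewrite -val_eqE i0 orbT.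
  - by rewrite cycle_path_rel_sym cycle_path_rel_cyc_pth.
have NP t : pth t \in nbhd eH A -> (t \in nbhd eP (pth @^-1: A)) || (b && (t == p0)).
  case/nbhdP => x; case: x / cycle_path_vertexP => [i||s] xA.
  - by rewrite cycle_path_rel_cyc_pth.
  - by rewrite cycle_path_rel_y2_pth /b xA => /eqP t0; rewrite -val_eqE t0 orbT.
  - by rewrite ePH => est; apply/orP; left; apply/nbhdP; exists s; rewrite ?inE.
have [B1 covB1 cardB1] : exists2 B1, indep_nbhd_cover eC B1 & #|B1| <= #|cyc @^-1: A| + b.
  apply: (indep_nbhd_cover_extend (cycle_rel_irr n_gt1) (@cycle_rel_sym n) (x := c0)).
    exact: (indep_preimset eCH indA).
  move=> i j; rewrite -eCH => /covA /orP [] /NC /orP [->|/andP [-> ->]]; rewrite ?orbT //.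
have [B2 covB2 cardB2] : exists2 B2, indep_nbhd_cover eP B2 & #|B2| <= #|pth @^-1: A| + b.
  apply: (indep_nbhd_cover_extend (@path_rel_irr k) (@path_rel_sym k) (x := p0)).
    exact: (indep_preimset ePH indA).
  move=> s t; rewrite -ePH => /covA /orP [] /NP /orP [->|/andP [-> ->]]; rewrite ?orbT //.
exists B1, B2; split => //.
by have := card_cycle_path_parts A; rewrite -/b; have := leq_b1 b; lia.
Qed.

End CyclePathSum.

Theorem proposition3p7 (K : fieldType) (n m : nat) :
  (3 <= n)%N -> (3 <= m)%N ->
  exists vC vP vH : nat,
    @is_vnumber_graph K n (cycle_rel n) vC /\
    @is_vnumber_graph K (m - 2) (path_rel (m - 2)) vP /\
    @is_vnumber_graph K (n + m - 1) (cycle_path_rel n m) vH /\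
    (vC + vP <= vH + 1)%N /\ (vH <= vC + vP)%N.
Proof.
move=> n_ge3 m_ge3; have n_gt1 : 1 < n := ltnW n_ge3.
have [C0 [vC covC0 minC0]] :=
  is_vnumber_graph_min_cover K (cycle_rel_irr n_gt1) (@cycle_rel_sym n).
have [P0 [vP covP0 minP0]] :=
  is_vnumber_graph_min_cover K (@path_rel_irr (m - 2)) (@path_rel_sym (m - 2)).
have [H0 [vH covH0 minH0]] :=
  is_vnumber_graph_min_cover K (cycle_path_rel_irr n_ge3 m_ge3) (@cycle_path_rel_sym n m).
exists #|C0|, #|P0|, #|H0|; do 3 (split; first by []); split.
- have [B1 [B2 [covB1 covB2 cardB]]] := cycle_path_lower n_ge3 m_ge3 covH0.
  exact: leq_trans (leq_add (minC0 _ covB1) (minP0 _ covB2)) cardB.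
- have [A covA cardA] := cycle_path_upper n_ge3 m_ge3 covC0 covP0.
  exact: leq_trans (minH0 _ covA) cardA.
Qed.
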